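(* Let $\rho_1,\rho_2$ be pure $n$-qubit states ($n\ge1$), $O$ a Hermitian operator, and $p\in[0,1)$. Let $\widetilde{\rho}_j=(1-p)\rho_j+p\,\mathbb{I}/2^n$ ($j=1,2$) be their images under global depolarizing noise, and assume $\mathrm{Tr}[\rho_1O]\ne\mathrm{Tr}[\rho_2O]$. For an integer $M\ge2$ consider the two Virtual Distillation estimators $$C_m^{(A)}(\widetilde{\rho})=\frac{\mathrm{Tr}[\widetilde{\rho}^MO]}{\mathrm{Tr}[\widetilde{\rho}^M]},\qquad C_m^{(B)}(\widetilde{\rho})=\frac{\mathrm{Tr}[\widetilde{\rho}^MO]}{\lambda^M},$$ where $\lambda$ is the largest eigenvalue of $\widetilde{\rho}$, with error mitigation costs $\gamma^{(B)}=\lambda^{-2M}$ and $\gamma^{(A)}\ge(\mathrm{Tr}[\widetilde{\rho}^M])^{-2}$. Let $\chi^{(A)},\chi^{(B)}$ be the corresponding relative resolvabilities of the two points. Then $$\chi^{(A)}\le\chi^{(B)}=\Gamma(n,M,p):=\frac{1}{(1-p)^2}\Big[\Big(1-p+\frac{p}{2^n}\Big)^M-\Big(\frac{p}{2^n}\Big)^M\Big]^2,$$ and $\Gamma(n,M,p)\le1$ for all $n\ge1$, $M\ge2$, $p\in[0,1)$; moreover $\Gamma$ is monotonically decreasing in $M$ (with asymptotically exponential decay) for $n\ge1$, $M\ge2$, and $\Gamma(1,2,p)=1$ for all $p$.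
   Context: The error mitigation cost $\gamma$ is the ratio of the variance of the mitigated estimate to the variance of the noisy estimate $\mathrm{Tr}[\widetilde{\rho}O]$; the stated values/bounds for $\gamma^{(A)},\gamma^{(B)}$ are the model used (they follow from estimating $\mathrm{Tr}[\widetilde\rho O]$, $\mathrm{Tr}[\widetilde\rho^M O]$, $\mathrm{Tr}[\widetilde\rho^M]$ via ancilla measurements whose statistical variances are state-independent, with the $M$-copy variance no smaller than the single-copy one). Note $\lambda$ and $\mathrm{Tr}[\widetilde\rho^M]$ are the same for $\widetilde\rho_1,\widetilde\rho_2$. The relative resolvability of the two points is $\chi=\frac{1}{\gamma}\Big(\frac{C_m(\widetilde{\rho}_1)-C_m(\widetilde{\rho}_2)}{\mathrm{Tr}[\widetilde{\rho}_1O]-\mathrm{Tr}[\widetilde{\rho}_2O]}\Big)^2$. *)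

From HB Require Import structures.
From mathcomp Require Import all_boot all_order all_algebra.
From mathcomp Require Export complex.
Set Implicit Arguments. Unset Strict Implicit. Unset Printing Implicit Defensive.
Import Order.TTheory GRing.Theory Num.Theory.
Local Open Scope ring_scope.

Definition adj (C : numClosedFieldType) (m n : nat) (A : 'M[C]_(m, n)) : 'M[C]_(n, m) :=
  map_mx Num.conj A^T.

Definition is_hermitian_mx (C : numClosedFieldType) (d : nat) (O : 'M[C]_d) : Prop :=
  adj O = O.

Definition pure_state (C : numClosedFieldType) (d : nat) (rho : 'M[C]_d) : Prop :=
  exists psi : 'cV[C]_d, adj psi *m psi = 1%:M /\ rho = psi *m adj psi.

Definition mxpow (C : pzRingType) (d : nat) (A : 'M[C]_d) (k : nat) : 'M[C]_d :=
  iter k (mulmx A) 1%:M.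

Definition depolarize (C : numClosedFieldType) (n : nat) (p : C)
    (rho : 'M[C]_(2 ^ n)) : 'M[C]_(2 ^ n) :=
  (1 - p) *: rho + (p / (2 ^ n)%N%:R) *: 1%:M.

(* l is the largest eigenvalue of A (all eigenvalues are real and <= l) *)
Definition is_largest_eigenvalue (C : numClosedFieldType) (d : nat)
    (A : 'M[C]_d) (l : C) : Prop :=
  eigenvalue A l /\ (forall a, eigenvalue A a -> a <= l).

Definition expval (C : numClosedFieldType) (d : nat) (rho O : 'M[C]_d) : C :=
  \tr (rho *m O).

Definition CmA (C : numClosedFieldType) (d : nat) (M : nat) (rt O : 'M[C]_d) : C :=
  \tr (mxpow rt M *m O) / \tr (mxpow rt M).

Definition CmB (C : numClosedFieldType) (d : nat) (M : nat) (lam : C)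
    (rt O : 'M[C]_d) : C :=
  \tr (mxpow rt M *m O) / lam ^+ M.

Definition resolvability (C : numClosedFieldType) (gamma c1 c2 t1 t2 : C) : C :=
  gamma^-1 * ((c1 - c2) / (t1 - t2)) ^+ 2.

Definition Gamma (R : realFieldType) (n M : nat) (p : R) : R :=
  ((1 - p) ^+ 2)^-1 *
  ((1 - p + p / (2 ^ n)%N%:R) ^+ M - (p / (2 ^ n)%N%:R) ^+ M) ^+ 2.
Arguments depolarize [C] n p rho.

From HB Require Import structures.
From mathcomp Require Import all_boot all_order all_algebra.
From mathcomp Require Import complex.
From mathcomp.algebra_tactics Require Import ring lra.
Import Order.TTheory GRing.Theory Num.Theory.
Local Open Scope ring_scope.

(* The noisy state (1 - p) |psi><psi| + q I, with q = p / 2^n, is an affine combination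
   of a rank-one projector and the identity, so all its powers stay in that family:
   rt^M = (lambda^M - q^M) |psi><psi| + q^M I, where lambda = 1 - p + q is its top
   eigenvalue.  Every trace entering the estimators is therefore affine in Tr[rho O],
   with the same slope for both states; the ratios of differences collapse to
   chi^(B) = ((lambda^M - q^M) / (1 - p))^2 = Gamma, and chi^(A) is Gamma scaled by
   Tr[rt^M]^-2 / gamma^(A) <= 1.  For the bounds on Gamma, 2^n >= 2 gives
   0 <= q <= lambda and lambda + q <= 1, so x^M (1 - x) is larger at lambda than at q:
   lambda^M - q^M decreases in M from lambda - q = 1 - p, and it is at most lambda^M,
   where lambda < 1 as soon as p > 0. *)

Section PowerDifference.
Context {R : realFieldType} {l q : R}.

Lemma subrXX_ge0 M : 0 <= q <= l -> 0 <= l ^+ M - q ^+ M.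
Proof. by case/andP=> q0 ql; rewrite subr_ge0 lerXn2r // nnegrE (le_trans q0). Qed.

Lemma subrXX_nonincr M : 0 <= q <= l -> l + q <= 1 ->
  l ^+ M.+2 - q ^+ M.+2 <= l ^+ M.+1 - q ^+ M.+1.
Proof.
move=> /andP[q0 ql] lq1.
have qXM : q ^+ M <= l ^+ M by rewrite lerXn2r // nnegrE (le_trans q0).
have q_bin0 : 0 <= q * (1 - q) by apply: mulr_ge0 => //; lra.
have q_bin_le : q * (1 - q) <= l * (1 - l).
  have : 0 <= (l - q) * (1 - l - q) by apply: mulr_ge0; lra.
  lra.
have := ler_pM (exprn_ge0 M q0) q_bin0 qXM q_bin_le.
rewrite !exprS; lra.
Qed.

Lemma subrXX_le_subr M : 0 <= q <= l -> l + q <= 1 -> (0 < M)%N ->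
  l ^+ M - q ^+ M <= l - q.
Proof.
move=> ql lq1; case: M => // M _; elim: M => [|M IH]; first by rewrite !expr1.
exact: le_trans (subrXX_nonincr M ql lq1) IH.
Qed.

End PowerDifference.

Section GammaBounds.
Context {R : realFieldType} (n : nat) {p : R}.
Let d : R := (2 ^ n)%N%:R.
Let q := p / d.
Let l := 1 - p + q.

Lemma GammaE M : Gamma n M p = ((l ^+ M - q ^+ M) / (1 - p)) ^+ 2.
Proof. by rewrite /Gamma [RHS]expr_div_n mulrC. Qed.

Lemma Gamma_ge0 M : 0 <= Gamma n M p.
Proof. by rewrite GammaE sqr_ge0. Qed.

Lemma noise_weights : 0 <= p < 1 -> 0 <= q <= l.
Proof.
case/andP=> p0 p1; have q0 : 0 <= q by rewrite divr_ge0 ?ler0n.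
by rewrite q0 /l; lra.
Qed.

Lemma top_weight_gt0 : 0 <= p < 1 -> 0 < l.
Proof. by case/andP=> p0 p1; rewrite /l ltr_wpDr ?subr_gt0 ?divr_ge0 ?ler0n. Qed.

Lemma noise_weights_sum : (0 < n)%N -> 0 <= p -> l + q <= 1.
Proof.
move=> n_gt0 p0; have d2 : 2 <= d by rewrite (ler_nat R 2) -(expn1 2) leq_exp2l.
have qd : q * d = p by rewrite mulfVK // gt_eqF // (lt_le_trans _ d2).
rewrite /l; nra.
Qed.

Lemma Gamma_le1 M : (0 < n)%N -> (0 < M)%N -> 0 <= p < 1 -> Gamma n M p <= 1.
Proof.
move=> n_gt0 M_gt0 p01; have /andP[p0 p1] := p01.
have ql := noise_weights p01; have lq1 := noise_weights_sum n_gt0 p0.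
have a_gt0 : 0 < 1 - p by rewrite subr_gt0.
have c_le : l ^+ M - q ^+ M <= 1 - p.
  by rewrite (le_trans (subrXX_le_subr _ ql lq1 M_gt0)) // /l addrK.
rewrite GammaE exprn_ile1 ?divr_ge0 ?subrXX_ge0 ?(ltW a_gt0) //.
by rewrite ler_pdivrMr // mul1r.
Qed.

Lemma Gamma_nonincr M : (0 < n)%N -> (0 < M)%N -> 0 <= p < 1 ->
  Gamma n M.+1 p <= Gamma n M p.
Proof.
move=> n_gt0 M_gt0 p01; have /andP[p0 p1] := p01.
have ql := noise_weights p01; have lq1 := noise_weights_sum n_gt0 p0.
have a_gt0 : 0 < 1 - p by rewrite subr_gt0.
rewrite !GammaE lerXn2r ?nnegrE ?divr_ge0 ?subrXX_ge0 ?ql ?(ltW a_gt0) //.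
rewrite ler_pM2r ?invr_gt0 //.
by case: M M_gt0 => // M _; apply: subrXX_nonincr.
Qed.

Lemma Gamma_exp_decay : (0 < n)%N -> 0 < p < 1 ->
  exists c r : R, 0 <= r < 1 /\ forall M, Gamma n M p <= c * r ^+ M.
Proof.
move=> n_gt0 /andP[p_gt0 p1]; have p01 : 0 <= p < 1 by rewrite ltW ?p1.
have /andP[q0 ql] := noise_weights p01.
have lq1 := noise_weights_sum n_gt0 (ltW p_gt0).
have q_gt0 : 0 < q by rewrite divr_gt0 // ltr0n expn_gt0.
have l_lt1 : l < 1 by lra.
exists ((1 - p) ^- 2), (l ^+ 2); split=> [|M].
  by rewrite sqr_ge0 /= expr_lt1 // (le_trans q0).
rewrite GammaE expr_div_n mulrC -exprM mulnC exprM ler_wpM2l ?invr_ge0 ?sqr_ge0 //.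
rewrite lerXn2r ?nnegrE ?subrXX_ge0 ?ql ?exprn_ge0 ?(le_trans q0) //.
by rewrite gerBl exprn_ge0.
Qed.

End GammaBounds.

Lemma Gamma_1_2 (R : realFieldType) (p : R) : p != 1 -> Gamma 1 2 p = 1.
Proof. by move=> p1; rewrite /Gamma; field; rewrite subr_eq0 eq_sym. Qed.

Section AffineIdempotent.
Context {F : comPzRingType} {d : nat} (P : 'M[F]_d) (a b : F).

Lemma mxpow_affine_idem k : P *m P = P ->
  mxpow (a *: P + b *: 1%:M) k = ((a + b) ^+ k - b ^+ k) *: P + b ^+ k *: 1%:M.
Proof.
move=> P_idem; elim: k => [|k IH]; first by rewrite /mxpow /= subrr scale0r add0r scale1r.
rewrite /mxpow /= -/(mxpow _ k) IH mulmxDl !mulmxDr -!scalemxAl -!scalemxAr.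
rewrite !mul1mx !mulmx1 P_idem !scalerA !addrA -!scalerDl !exprS.
by congr (_ *: _ + _ *: _); ring.
Qed.

Lemma mxtrace_affine_mulmx (O : 'M[F]_d) :
  \tr ((a *: P + b *: 1%:M) *m O) = a * \tr (P *m O) + b * \tr O.
Proof. by rewrite mulmxDl -!scalemxAl mul1mx mxtraceD !mxtraceZ. Qed.

Lemma mxtrace_affine : \tr (a *: P + b *: 1%:M) = a * \tr P + b * d%:R.
Proof. by rewrite mxtraceD !mxtraceZ mxtrace1. Qed.

End AffineIdempotent.

Section AffineIdempotentSpectrum.
Context {F : fieldType} {d : nat} {P : 'M[F]_d} (a b : F).
Hypothesis P_idem : P *m P = P.

Lemma eigenvalue_affine_idem {w : 'rV[F]_d} :
  w != 0 -> w *m P = w -> eigenvalue (a *: P + b *: 1%:M) (a + b).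
Proof.
move=> w_neq0 wP; apply/eigenvalueP; exists w => //.
by rewrite mulmxDr -!scalemxAr wP mulmx1 scalerDl.
Qed.

Lemma eigenvalue_affine_idemP {lam : F} :
  eigenvalue (a *: P + b *: 1%:M) lam -> lam = b \/ lam = a + b.
Proof.
case/eigenvalueP=> v; rewrite mulmxDr -!scalemxAr mulmx1 => vE v_neq0.
have avP : a *: (v *m P) = (lam - b) *: v by rewrite scalerBl -vE addrK.
have avPP : a *: (v *m P) = (lam - b) *: (v *m P).
  by rewrite -[in LHS]P_idem mulmxA scalemxAl avP -scalemxAl.
have [->|lam_neq_b] := eqVneq lam b; [by left | right].
have vP : v *m P = v.
  by apply: (scalerI (a := lam - b)); rewrite ?subr_eq0 // -avP avPP.
move: avP; rewrite vP => /eqP; rewrite -subr_eq0 -scalerBl scaler_eq0.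
by rewrite (negbTE v_neq0) orbF subr_eq0 => /eqP ->; ring.
Qed.

End AffineIdempotentSpectrum.

Lemma largest_eigenvalue_affine_idem {C : numClosedFieldType} {d : nat}
    {P : 'M[C]_d} {w : 'rV[C]_d} {a b lam : C} :
  P *m P = P -> w != 0 -> w *m P = w -> 0 < a ->
  is_largest_eigenvalue (a *: P + b *: 1%:M) lam -> lam = a + b.
Proof.
move=> P_idem w_neq0 wP a_gt0 [ev_lam lam_max].
case: (eigenvalue_affine_idemP a b P_idem ev_lam) => // lam_b.
have := lam_max _ (eigenvalue_affine_idem a b w_neq0 wP).
by rewrite lam_b gerDr (lt_geF a_gt0).
Qed.

Lemma pure_stateP {C : numClosedFieldType} {d : nat} {rho : 'M[C]_d} :
  pure_state rho ->
  [/\ rho *m rho = rho, \tr rho = 1 & exists2 w : 'rV[C]_d, w != 0 & w *m rho = w].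
Proof.
case=> psi [psi_unit ->]; split.
- by rewrite mulmxA -(mulmxA psi) psi_unit mulmx1.
- by rewrite mxtrace_mulC psi_unit mxtrace1.
exists (adj psi); last by rewrite mulmxA psi_unit mul1mx.
apply/eqP=> psi0; move: psi_unit; rewrite psi0 mul0mx => /matrixP/(_ ord0 ord0).
by rewrite !mxE => /eqP; rewrite eq_sym oner_eq0.
Qed.

Lemma ler_invM_sqr_div (F : numFieldType) (g s x y : F) :
  0 < s -> s ^- 2 <= g -> 0 <= (x / y) ^+ 2 -> g^-1 * (x / (s * y)) ^+ 2 <= (x / y) ^+ 2.
Proof.
move=> s_gt0 sg xy2_ge0; have g_gt0 : 0 < g by rewrite (lt_le_trans _ sg) // invr_gt0 exprn_gt0.
rewrite [s * y]mulrC invfM [x * _]mulrA expr_div_n mulrCA ler_piMr //.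
by rewrite mulrC ler_pdivrMr // mul1r.
Qed.

Lemma resolvability_affine (C : numClosedFieldType) (g s c a u v t1 t2 : C) :
  t1 != t2 ->
  resolvability g ((c * t1 + u) / s) ((c * t2 + u) / s) (a * t1 + v) (a * t2 + v)
  = g^-1 * (c / (s * a)) ^+ 2.
Proof.
move=> t12; rewrite /resolvability; congr (_ * _ ^+ 2).
have -> : (c * t1 + u) / s - (c * t2 + u) / s = c / s * (t1 - t2) by ring.
have -> : a * t1 + v - (a * t2 + v) = (t1 - t2) * a by ring.
by rewrite invfM mulrA mulfK ?subr_eq0 // invfM mulrA.
Qed.

Section AffinePureState.
Context {C : numClosedFieldType} {d : nat} (a b : C) {rho : 'M[C]_d}.
Hypothesis rho_pure : pure_state rho.
Let rt := a *: rho + b *: 1%:M.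

Lemma expval_affine O : expval rt O = a * expval rho O + b * \tr O.
Proof. exact: mxtrace_affine_mulmx. Qed.

Lemma mxtrace_mxpow_affine_pure M :
  \tr (mxpow rt M) = (a + b) ^+ M - b ^+ M + b ^+ M * d%:R.
Proof.
have [rho_idem rho_tr _] := pure_stateP rho_pure.
by rewrite mxpow_affine_idem // mxtrace_affine rho_tr mulr1.
Qed.

Lemma mxtrace_mxpow_affine_pure_mul M O :
  \tr (mxpow rt M *m O) = ((a + b) ^+ M - b ^+ M) * expval rho O + b ^+ M * \tr O.
Proof.
have [rho_idem _ _] := pure_stateP rho_pure.
by rewrite mxpow_affine_idem // mxtrace_affine_mulmx.
Qed.

Lemma CmA_affine_pure M O : CmA M rt O =
  (((a + b) ^+ M - b ^+ M) * expval rho O + b ^+ M * \tr O) /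
  ((a + b) ^+ M - b ^+ M + b ^+ M * d%:R).
Proof. by rewrite /CmA mxtrace_mxpow_affine_pure mxtrace_mxpow_affine_pure_mul. Qed.

Lemma CmB_affine_pure M lam O : CmB M lam rt O =
  (((a + b) ^+ M - b ^+ M) * expval rho O + b ^+ M * \tr O) / lam ^+ M.
Proof. by rewrite /CmB mxtrace_mxpow_affine_pure_mul. Qed.

Lemma largest_eigenvalue_affine_pure lam :
  0 < a -> is_largest_eigenvalue rt lam -> lam = a + b.
Proof.
have [rho_idem _ [w w_neq0 wrho]] := pure_stateP rho_pure.
exact: (largest_eigenvalue_affine_idem rho_idem w_neq0 wrho).
Qed.

End AffinePureState.

Section DepolarizedPureState.
Local Open Scope complex_scope.
Context {R : rcfType} {n : nat} {p : R}.
Hypothesis p01 : 0 <= p < 1.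
Let d : R := (2 ^ n)%N%:R.
Let q := p / d.
Let l := 1 - p + q.
Let depol := depolarize n p%:C.

Lemma depolarize_real rho : depol rho = (1 - p)%:C *: rho + q%:C *: 1%:M.
Proof. by rewrite /depol /depolarize rmorphB rmorph1 fmorph_div rmorph_nat. Qed.

Lemma Gamma_complex M :
  (Gamma n M p)%:C = ((((1 - p)%:C + q%:C) ^+ M - q%:C ^+ M) / (1 - p)%:C) ^+ 2.
Proof. by rewrite GammaE -rmorphD -!rmorphXn -rmorphB -fmorph_div -rmorphXn. Qed.

Lemma depolarize_moment_gt0 M :
  0 < ((1 - p)%:C + q%:C) ^+ M - q%:C ^+ M + q%:C ^+ M * (2 ^ n)%:R.
Proof.
have /andP[q0 _] := noise_weights n p01.
have d1 : 1 <= d by rewrite (ler_nat R 1) expn_gt0.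
have -> : ((1 - p)%:C + q%:C) ^+ M - q%:C ^+ M + q%:C ^+ M * (2 ^ n)%:R =
    (l ^+ M + q ^+ M * (d - 1))%:C.
  by rewrite /l !(rmorphD, rmorphB, rmorphM, rmorphXn, rmorph1, rmorph_nat); ring.
rewrite -(rmorph0 (real_complex R)) ltcR.
by rewrite ltr_wpDr ?exprn_gt0 ?mulr_ge0 ?exprn_ge0 ?subr_ge0 ?top_weight_gt0.
Qed.

Lemma largest_eigenvalue_depolarize {rho lam} : pure_state rho ->
  is_largest_eigenvalue (depol rho) lam -> lam = (1 - p)%:C + q%:C.
Proof.
have a_gt0 : 0 < (1 - p)%:C by rewrite ltcR subr_gt0; case/andP: p01.
move=> rho_pure; rewrite depolarize_real.
exact: (largest_eigenvalue_affine_pure _ _ rho_pure _ a_gt0).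
Qed.

Context {M : nat} {rho1 rho2 O : 'M[R[i]]_(2 ^ n)} {lam1 lam2 : R[i]}.
Hypotheses (rho1_pure : pure_state rho1) (rho2_pure : pure_state rho2).
Hypothesis expval_neq : expval rho1 O != expval rho2 O.
Hypotheses (lam1_max : is_largest_eigenvalue (depol rho1) lam1)
           (lam2_max : is_largest_eigenvalue (depol rho2) lam2).

Lemma resolvability_CmB_depolarize :
  resolvability (lam1 ^- (2 * M)) (CmB M lam1 (depol rho1) O) (CmB M lam2 (depol rho2) O)
    (expval (depol rho1) O) (expval (depol rho2) O) = (Gamma n M p)%:C.
Proof.
have lXM_neq0 : ((1 - p)%:C + q%:C) ^+ M != 0.
  by rewrite -rmorphD expf_neq0 // fmorph_eq0 gt_eqF // top_weight_gt0.
rewrite (largest_eigenvalue_depolarize rho1_pure lam1_max).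
rewrite (largest_eigenvalue_depolarize rho2_pure lam2_max).
rewrite !depolarize_real (CmB_affine_pure _ _ rho1_pure) (CmB_affine_pure _ _ rho2_pure).
rewrite !expval_affine resolvability_affine // invrK Gamma_complex mulnC exprM -exprMn.
by rewrite invfM mulrCA mulVKf.
Qed.

Lemma resolvability_CmA_le_Gamma {gA} :
  \tr (mxpow (depol rho1) M) ^- 2 <= gA ->
  resolvability gA (CmA M (depol rho1) O) (CmA M (depol rho2) O)
    (expval (depol rho1) O) (expval (depol rho2) O) <= (Gamma n M p)%:C.
Proof.
rewrite depolarize_real (mxtrace_mxpow_affine_pure _ _ rho1_pure) => gA_ge.
rewrite !depolarize_real (CmA_affine_pure _ _ rho1_pure) (CmA_affine_pure _ _ rho2_pure).
rewrite !expval_affine resolvability_affine // Gamma_complex.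
rewrite ler_invM_sqr_div ?depolarize_moment_gt0 //.
by rewrite -Gamma_complex lecR Gamma_ge0.
Qed.

End DepolarizedPureState.

Theorem proposition3 (R : rcfType) :
  (forall (n M : nat) (p : R) (rho1 rho2 O : 'M[R[i]]_(2 ^ n))
          (lam1 lam2 gammaA : R[i]),
      (1 <= n)%N -> (2 <= M)%N -> 0 <= p < 1 ->
      pure_state rho1 -> pure_state rho2 -> is_hermitian_mx O ->
      expval rho1 O != expval rho2 O ->
      let rt1 := depolarize n (real_complex R p) rho1 in
      let rt2 := depolarize n (real_complex R p) rho2 in
      is_largest_eigenvalue rt1 lam1 ->
      is_largest_eigenvalue rt2 lam2 ->
      (\tr (mxpow rt1 M)) ^- 2 <= gammaA ->
      let gammaB := lam1 ^- (2 * M) in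
      let chiA := resolvability gammaA (CmA M rt1 O) (CmA M rt2 O)
                    (expval rt1 O) (expval rt2 O) in
      let chiB := resolvability gammaB (CmB M lam1 rt1 O) (CmB M lam2 rt2 O)
                    (expval rt1 O) (expval rt2 O) in
      chiA <= chiB /\ chiB = real_complex R (Gamma n M p))
  /\ (forall (n M : nat) (p : R), (1 <= n)%N -> (2 <= M)%N -> 0 <= p < 1 ->
        Gamma n M p <= 1)
  /\ (forall (n M : nat) (p : R), (1 <= n)%N -> (2 <= M)%N -> 0 <= p < 1 ->
        Gamma n M.+1 p <= Gamma n M p)
  /\ (forall (n : nat) (p : R), (1 <= n)%N -> 0 < p < 1 ->
        exists c r : R, 0 <= r < 1 /\
          forall M : nat, (2 <= M)%N -> Gamma n M p <= c * r ^+ M)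
  /\ (forall p : R, 0 <= p < 1 -> Gamma 1 2 p = 1).
Proof.
split.
  move=> n M p rho1 rho2 O lam1 lam2 gammaA _ _ p01 rho1_pure rho2_pure _ expval_neq.
  move=> rt1 rt2 lam1_max lam2_max gammaA_ge gammaB chiA chiB.
  have chiBE : chiB = real_complex R (Gamma n M p).
    exact: (resolvability_CmB_depolarize p01 rho1_pure rho2_pure expval_neq lam1_max lam2_max).
  split=> //; rewrite chiBE.
  exact: (resolvability_CmA_le_Gamma p01 rho1_pure rho2_pure expval_neq gammaA_ge).
split=> [n M p n_gt0 /ltnW M_gt0 p01|]; first exact: Gamma_le1.
split=> [n M p n_gt0 /ltnW M_gt0 p01|]; first exact: Gamma_nonincr.
split=> [n p n_gt0 p01|p /andP[_ p_lt1]]; last by rewrite Gamma_1_2 // lt_eqF.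
by have [c [r [r01 decay]]] := Gamma_exp_decay n n_gt0 p01; exists c, r.
Qed.
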